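(* On $S_{1,2}=S_1\cap S_2$ the coefficients $(a_0,a_1,h_1,h_2)$ are free parameters, with $a_2=2h_2+h_{1,x}+a_0h_1$ and $h_3=-h_{1,xx}-2h_{2,x}+h_1^2-a_1h_1-a_0(h_{1,x}+h_2)$, and the restriction of the DKP flow $t_2$ to $S_{1,2}$ is $\partial_{t_2}a_0=\partial_x(2a_1-a_0^2+a_{0,x})$, $\partial_{t_2}a_1=2a_{2,x}+a_{1,xx}+2a_{0,x}(h_1-a_1)$, $\partial_{t_2}h_1=\partial_x(2h_2+h_{1,x})$, $\partial_{t_2}h_2=-\partial_x\big(2h_{1,xx}+3h_{2,x}-3h_1^2+2a_0(h_{1,x}+h_2)+2a_1h_1\big)$. Moreover, on $S_{1,2}$, $z\big(h^{(2)}+a_0h^{(1)}+(a_1-2h_1)\big)=h^{(3)}+a_0h^{(2)}+(a_1-3h_1)h^{(1)}+(a_2-2a_0h_1-3h_2-3h_{1,x})$.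
   Context: Let $x$ be a space variable; coefficients are functions of $x$, subscript $x$ denotes $\partial_x$. $M$ is the affine space of formal Laurent series $h(z)=z+\sum_{j\ge1}h_jz^{-j}$, $A$ that of $a(z)=z+\sum_{j\ge0}a_jz^{-j}$, $N=M\times A$. Faà di Bruno iterates: $h^{(0)}=1$, $h^{(j+1)}=\partial_xh^{(j)}+h\,h^{(j)}$. For $j\ge0$ the KP current $H^{(j)}$ is the unique series $h^{(j)}+\sum_{l=0}^{j-2}p^j_l[h]h^{(l)}$ ($p^j_l$ differential polynomials in the $h_i$) with $H^{(j)}=z^j+O(z^{-1})$; e.g. $H^{(1)}=h$, $H^{(2)}=h^{(2)}-2h_1$, $H^{(3)}=h^{(3)}-3h_1h^{(1)}-3(h_2+h_{1,x})$. The DKP equations on $N$ are $\partial_{t_j}h=\partial_xH^{(j)}$, $\partial_{t_j}a=a(\tilde H^{(j)}-H^{(j)})$, with $\tilde H^{(j)}$ the current evaluated at $\tilde h=h+a_x/a$. For $l\ge-1$, $S_l\subset N$ is defined by $z^la=H^{(l+1)}+\sum_{m=0}^{l}a_mH^{(l-m)}$; thus $S_1:\ za=H^{(2)}+a_0H^{(1)}+a_1$ and $S_2:\ z^2a=H^{(3)}+a_0H^{(2)}+a_1H^{(1)}+a_2$. *)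

(* Formal Laurent series in z^{-1} over a commutative
   differential ring (R, d), d playing the role of \partial_x. *)
From HB Require Import structures.
From mathcomp Require Import all_boot all_order all_algebra.
Set Implicit Arguments. Unset Strict Implicit. Unset Printing Implicit Defensive.
Import Order.TTheory GRing.Theory Num.Theory.
Local Open Scope ring_scope.

Definition is_derivation (R : comNzRingType) (d : R -> R) : Prop :=
  (forall x y, d (x + y) = d x + d y) /\ (forall x y, d (x * y) = d x * y + x * d y).

Section Laurent.
Variable R : comNzRingType.
Variable d : R -> R.

(* A series  sum_{k>=0} lco k * z^(ldeg - k)  *)
Record lser := LSer { ldeg : int; lco : nat -> R }.

Definition lcoef (s : lser) (n : int) : R :=
  if n <= ldeg s then lco s `|ldeg s - n|%N else 0.

Definition lseq (s t : lser) : Prop := forall n : int, lcoef s n = lcoef t n.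

Definition ladd (s t : lser) : lser :=
  let D := Num.max (ldeg s) (ldeg t) in
  LSer D (fun k => lcoef s (D - k%:Z) + lcoef t (D - k%:Z)).
Definition lopp (s : lser) : lser := LSer (ldeg s) (fun k => - lco s k).
Definition lsub (s t : lser) : lser := ladd s (lopp t).
Definition lmul (s t : lser) : lser :=
  LSer (ldeg s + ldeg t) (fun k => \sum_(i < k.+1) lco s i * lco t (k - i)).
Definition lC (r : R) : lser := LSer 0 (fun k => if k == 0%N then r else 0).
Definition lz : lser := LSer 1 (fun k => if k == 0%N then 1 else 0).
Definition ldx (s : lser) : lser := LSer (ldeg s) (fun k => d (lco s k)).

(* inverse of a series whose leading coefficient lco s 0 is 1:
   b_0 = 1, b_k = - sum_{i<k} u_{k-i} b_i *)
Fixpoint invl (u : nat -> R) (k : nat) : seq R :=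
  match k with
  | 0 => [:: 1]
  | k'.+1 => let p := invl u k' in
             rcons p (- \sum_(i < k'.+1) u (k'.+1 - i)%N * nth 0 p i)
  end.
Definition linv (s : lser) : lser :=
  LSer (- ldeg s) (fun k => nth 0 (invl (lco s) k) k).

(* points of M: h(z) = z + sum_{j>=1} h_j z^{-j}, with h_j = h j (h 0 unused) *)
Definition hS (h : nat -> R) : lser :=
  LSer 1 (fun k => match k with 0 => 1 | 1 => 0 | k'.+1 => h k' end).
(* points of A: a(z) = z + sum_{j>=0} a_j z^{-j}, with a_j = a j *)
Definition aS (a : nat -> R) : lser :=
  LSer 1 (fun k => match k with 0 => 1 | k'.+1 => a k' end).

Fixpoint fdb (s : lser) (j : nat) : lser :=
  match j with
  | 0 => lC 1
  | j'.+1 => ladd (ldx (fdb s j')) (lmul s (fdb s j'))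
  end.

(* KP currents H^(0..3), as given in the context; the coefficient
   s_i of z^{-i} is lcoef s (- i) *)
Definition cf (s : lser) (i : nat) : R := lcoef s (- i%:Z).
Definition H0 (s : lser) : lser := lC 1.
Definition H1 (s : lser) : lser := s.
Definition H2 (s : lser) : lser := lsub (fdb s 2) (lC (2%:R * cf s 1)).
Definition H3 (s : lser) : lser :=
  lsub (lsub (fdb s 3) (lmul (lC (3%:R * cf s 1)) (fdb s 1)))
       (lC (3%:R * (cf s 2 + d (cf s 1)))).

Definition htilde (hs as_ : lser) : lser := ladd hs (lmul (ldx as_) (linv as_)).

Definition S1 (h a : nat -> R) : Prop :=
  lseq (lmul lz (aS a))
       (ladd (ladd (H2 (hS h)) (lmul (lC (a 0%N)) (H1 (hS h)))) (lmul (lC (a 1%N)) (H0 (hS h)))).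
Definition S2 (h a : nat -> R) : Prop :=
  lseq (lmul (lmul lz lz) (aS a))
       (ladd (ladd (ladd (H3 (hS h)) (lmul (lC (a 0%N)) (H2 (hS h))))
                   (lmul (lC (a 1%N)) (H1 (hS h))))
             (lmul (lC (a 2%N)) (H0 (hS h)))).
Definition S12 (h a : nat -> R) : Prop := S1 h a /\ S2 h a.

Definition dkp2_h (h a : nat -> R) : lser := ldx (H2 (hS h)).
Definition dkp2_a (h a : nat -> R) : lser :=
  lmul (aS a) (lsub (H2 (htilde (hS h) (aS a))) (H2 (hS h))).
(* component equations: d_{t_2} h_j = dkp2_hc h a j (j >= 1),
                        d_{t_2} a_j = dkp2_ac h a j (j >= 0) *)
Definition dkp2_hc (h a : nat -> R) (j : nat) : R := cf (dkp2_h h a) j.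
Definition dkp2_ac (h a : nat -> R) (j : nat) : R := cf (dkp2_a h a) j.

End Laurent.

From HB Require Import structures.
From mathcomp Require Import all_boot all_order all_algebra.
From mathcomp Require Import zify ring.
Import Order.TTheory GRing.Theory Num.Theory.
Local Open Scope ring_scope.
Set Implicit Arguments. Unset Strict Implicit. Unset Printing Implicit Defensive.

(* Comparing coefficients of z^-k, S_1 gives a_(k+1) and S_2 gives a_(k+2) as differential
   polynomials in h_1, ..., h_(k+2), a_0, a_1, a_2. At k = 0 they only return a_1 and a_2
   (S1_next0, S2_next0); for k >= 1, eliminating a_(k+2) between S_1 at k+1 and S_2 at k
   leaves a recursion expressing h_(k+2) through h_1, ..., h_(k+1) (h_next). So h is the
   unique solution of a causal recursion started at (h_1, h_2), and then a is read off S_1.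
   The flow formulas are coefficient computations, with a_x / a expanded to order z^-3, and
   the last identity is S_2 minus z times S_1. *)

Section CausalRecursion.
Variables (T : Type) (x0 : T).

Definition causal (f : (nat -> T) -> nat -> T) :=
  forall g g' n, (forall j, (j < n)%N -> g j = g' j) -> f g n = f g' n.

Variable f : (nat -> T) -> nat -> T.
Hypothesis f_causal : causal f.

Lemma causal_fix_unique g g' :
  (forall n, g n = f g n) -> (forall n, g' n = f g' n) -> g =1 g'.
Proof. by move=> gE g'E; elim/ltn_ind=> n IH; rewrite gE g'E; apply: f_causal. Qed.

Fixpoint cfix_seq m : seq T :=
  if m is m'.+1 then rcons (cfix_seq m') (f (nth x0 (cfix_seq m')) m') else [::].

Definition cfix n := nth x0 (cfix_seq n.+1) n.

Lemma size_cfix_seq m : size (cfix_seq m) = m.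
Proof. by elim: m => //= m IH; rewrite size_rcons IH. Qed.

Lemma nth_cfix_seq m j : (j < m)%N -> nth x0 (cfix_seq m) j = cfix j.
Proof.
elim: m => // m IH; rewrite ltnS leq_eqVlt => /orP[/eqP -> // | lt_jm].
by rewrite /= nth_rcons size_cfix_seq lt_jm IH.
Qed.

Lemma cfixE n : cfix n = f cfix n.
Proof.
rewrite /cfix /= nth_rcons size_cfix_seq ltnn eqxx.
by apply: f_causal => j; apply: nth_cfix_seq.
Qed.

End CausalRecursion.

Section LaurentCoefficients.
Variable R : comNzRingType.
Implicit Types (s t : lser R) (r : R) (n : int).

Lemma lcoef_gt_ldeg s n : ldeg s < n -> lcoef s n = 0.
Proof. by move=> lt_s_n; rewrite /lcoef leNgt lt_s_n. Qed.

Lemma lcoef_ldeg s (k : nat) : lcoef s (ldeg s - k%:Z) = lco s k.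
Proof. by rewrite /lcoef ifT; [congr lco|]; lia. Qed.

Lemma lcoefD s t n : lcoef (ladd s t) n = lcoef s n + lcoef t n.
Proof.
rewrite {1}/lcoef /=; case: ifP => le_n.
  by congr (lcoef _ _ + lcoef _ _); lia.
by rewrite !lcoef_gt_ldeg ?addr0 //; lia.
Qed.

Lemma lcoefN s n : lcoef (lopp s) n = - lcoef s n.
Proof. by rewrite /lcoef /=; case: ifP; rewrite ?oppr0. Qed.

Lemma lcoefB s t n : lcoef (lsub s t) n = lcoef s n - lcoef t n.
Proof. by rewrite lcoefD lcoefN. Qed.

Lemma lcoefC r n : lcoef (lC r) n = if n == 0 then r else 0.
Proof.
rewrite /lcoef /=; case: ifP => n_le0; last by case: eqP n_le0 => // ->.
by congr (if _ then _ else _); apply/eqP/eqP; lia.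
Qed.

Lemma lcoefM s t n : lcoef (lmul s t) n =
  if n <= ldeg s + ldeg t then
    \sum_(i < (absz (ldeg s + ldeg t - n)%R).+1) lcoef s (ldeg s - i%:Z) * lcoef t (n - ldeg s + i%:Z)
  else 0.
Proof.
rewrite {1}/lcoef /=; case: ifP => // le_n.
apply: eq_bigr => i _; rewrite lcoef_ldeg; congr (_ * _).
by rewrite -lcoef_ldeg; congr lcoef; case: i => i /= lt_i; lia.
Qed.

Lemma lcoefMC s t n : lcoef (lmul s t) n = lcoef (lmul t s) n.
Proof.
rewrite /lcoef /= (addrC (ldeg s)); case: ifP => // _.
rewrite (reindex_inj rev_ord_inj) /=; apply: eq_bigr => i _.
by rewrite subSS subKn 1?mulrC // -ltnS.
Qed.

Lemma lcoefM_congr s s' t t' n : ldeg s = ldeg s' -> ldeg t = ldeg t' ->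
  lcoef s =1 lcoef s' -> lcoef t =1 lcoef t' ->
  lcoef (lmul s t) n = lcoef (lmul s' t') n.
Proof.
move=> eq_ds eq_dt eq_s eq_t; rewrite !lcoefM eq_ds eq_dt; case: ifP => // _.
by apply: eq_bigr => i _; rewrite eq_s eq_t.
Qed.

Lemma lcoefM_monomial s t n : (forall k, (0 < k)%N -> lco s k = 0) ->
  lcoef (lmul s t) n = lco s 0 * lcoef t (n - ldeg s).
Proof.
move=> s_mono; rewrite lcoefM; case: ifP => le_n; last first.
  by rewrite lcoef_gt_ldeg ?mulr0 //; lia.
rewrite big_ord_recl big1 ?addr0 => [|i _]; last first.
  by rewrite (lcoef_ldeg s (lift ord0 i)) s_mono ?mul0r.
by rewrite -[ldeg s]subr0 lcoef_ldeg subr0.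
Qed.

Lemma lcoef_lCM r t n : lcoef (lmul (lC r) t) n = r * lcoef t n.
Proof. by rewrite lcoefM_monomial ?subr0 // => -[]. Qed.

Lemma lcoef_lzM t n : lcoef (lmul (lz R) t) n = lcoef t (n - 1).
Proof. by rewrite lcoefM_monomial ?mul1r // => -[]. Qed.

Lemma lcoef_lz2M t n : lcoef (lmul (lmul (lz R) (lz R)) t) n = lcoef t (n - 2%:Z).
Proof.
rewrite lcoefM_monomial /= ?big_ord1 ?mul1r // => -[|k] // _.
by rewrite big_ord_recl big1 /= ?mulr0 ?addr0 // => i _; rewrite mul0r.
Qed.

Lemma lcoefM_ldeg1 s t (e k : nat) : ldeg s = 1 -> ldeg t = e%:Z ->
  lcoef (lmul s t) (- k%:Z) = lcoef s 1 * lcoef t (- k.+1%:Z)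
    + \sum_(j < k.+1) lcoef s (- j%:Z) * lcoef t (- (k - j)%N%:Z)
    + \sum_(j < e) lcoef s (- (k.+1 + j)%N%:Z) * lcoef t j.+1%:Z.
Proof.
move=> ds dt; rewrite lcoefM ds dt ifT; last by lia.
have -> : absz (1 + e%:Z - - k%:Z)%R = (k.+1 + e)%N by lia.
rewrite big_ord_recl big_split_ord /= addrA.
congr (_ * lcoef _ _ + _ + _); first by lia.
all: by apply: eq_bigr => -[i lt_i] _; congr (lcoef _ _ * lcoef _ _) => /=; rewrite /bump /=; lia.
Qed.

End LaurentCoefficients.

Section Derivation.
Variables (R : comNzRingType) (d : R -> R).
Hypothesis hd : is_derivation d.

Lemma derivD : {morph d : x y / x + y}. Proof. by case: hd. Qed.
Lemma derivM x y : d (x * y) = d x * y + x * d y. Proof. by case: hd. Qed.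
Lemma deriv0 : d 0 = 0. Proof. by apply: (addrI (d 0)); rewrite -derivD !addr0. Qed.

HB.instance Definition _ := GRing.isNmodMorphism.Build R R d (deriv0, derivD).

Lemma deriv1 : d 1 = 0.
Proof.
have d11 := derivM 1 1; rewrite !mulr1 mul1r in d11.
by apply: (addrI (d 1)); rewrite addr0 -d11.
Qed.

Lemma derivn n : d n%:R = 0.
Proof. by rewrite -(mul0rn _ n) -deriv1; apply: raddfMn. Qed.

Lemma derivN x : d (- x) = - d x. Proof. exact: raddfN. Qed.
Lemma derivB x y : d (x - y) = d x - d y. Proof. exact: raddfB. Qed.

Lemma derivMn x n : d (n%:R * x) = n%:R * d x.
Proof. by rewrite derivM derivn mul0r add0r. Qed.

Implicit Types (s t : lser R) (n : int).

Lemma lcoef_ldx s n : lcoef (ldx d s) n = d (lcoef s n).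
Proof. by rewrite /lcoef /=; case: ifP; rewrite ?deriv0. Qed.

Lemma fdbS s j : fdb d s j.+1 = ladd (ldx d (fdb d s j)) (lmul s (fdb d s j)).
Proof. by []. Qed.

Lemma ldeg_fdb s j : ldeg s = 1 -> ldeg (fdb d s j) = j%:Z.
Proof. by move=> ds; elim: j => //= j ->; rewrite ds; lia. Qed.

Lemma lcoef_fdb1 s n : lcoef (fdb d s 1) n = lcoef s n.
Proof.
rewrite fdbS lcoefD lcoef_ldx lcoefC lcoefMC lcoefM_monomial /= ?subr0; last by case.
by case: eqP; rewrite ?deriv1 ?deriv0 add0r mul1r.
Qed.

Lemma eq_fdb s s' j : ldeg s = ldeg s' -> lcoef s =1 lcoef s' ->
  ldeg (fdb d s j) = ldeg (fdb d s' j) /\ lcoef (fdb d s j) =1 lcoef (fdb d s' j).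
Proof.
move=> eq_ds eq_s; elim: j => [//|j [eq_dj eq_j]].
split=> [|n]; first by rewrite /= eq_dj eq_ds.
by rewrite !fdbS !lcoefD !lcoef_ldx eq_j (lcoefM_congr _ eq_ds eq_dj eq_s eq_j).
Qed.

Lemma lcoef_H2 s n :
  lcoef (H2 d s) n = lcoef (fdb d s 2) n - (if n == 0 then 2%:R * cf s 1 else 0).
Proof. by rewrite lcoefB lcoefC. Qed.

Lemma lcoef_H3 s n : lcoef (H3 d s) n = lcoef (fdb d s 3) n - 3%:R * cf s 1 * lcoef s n
  - (if n == 0 then 3%:R * (cf s 2 + d (cf s 1)) else 0).
Proof. by rewrite !lcoefB lcoef_lCM lcoef_fdb1 lcoefC. Qed.

Lemma eq_H2 s s' : ldeg s = ldeg s' -> lcoef s =1 lcoef s' -> lcoef (H2 d s) =1 lcoef (H2 d s').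
Proof.
move=> eq_ds eq_s n; have [_ eq_f2] := eq_fdb 2 eq_ds eq_s.
by rewrite !lcoef_H2 eq_f2 /cf eq_s.
Qed.

(* [hS] ignores [h 0]; [hcoef h k] is the coefficient of z^-k of [hS h]. *)
Definition hcoef (h : nat -> R) k := if k is 0 then 0 else h k.
Definition conv (c : nat -> R) k := \sum_(j < k.+1) c j * c (k - j)%N.
Definition fdb2_coef (c : nat -> R) k := d (c k) + 2%:R * c k.+1 + conv c k.
Definition hfdb2_coef (c : nat -> R) k := \sum_(j < k.+1) c j * fdb2_coef c (k - j)%N.

Lemma lcoef_hS (h : nat -> R) (k : nat) : lcoef (hS h) (- k%:Z) = hcoef h k.
Proof. by rewrite /lcoef /= ifT; [have -> : absz (1 - - k%:Z)%R = k.+1 by lia|lia]; case: k. Qed.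

Lemma lcoef_aS (a : nat -> R) (k : nat) : lcoef (aS a) (- k%:Z) = a k.
Proof. by rewrite /lcoef /= ifT; [have -> : absz (1 - - k%:Z)%R = k.+1 by lia|lia]. Qed.

Lemma lcoef_fdb2E s n : ldeg s = 1 -> lcoef (fdb d s 2) n = d (lcoef s n) + lcoef (lmul s s) n.
Proof.
move=> ds; have eq_f1 := lcoef_fdb1 s.
rewrite fdbS lcoefD lcoef_ldx eq_f1; congr (_ + _).
by apply: lcoefM_congr; rewrite ?ldeg_fdb.
Qed.

Lemma lcoef_fdb2_neg (h : nat -> R) (k : nat) : lcoef (fdb d (hS h) 2) (- k%:Z) = fdb2_coef (hcoef h) k.
Proof.
rewrite lcoef_fdb2E // (lcoefM_ldeg1 _ _ (e := 1)) // big_ord1 addn0 !lcoef_hS.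
under eq_bigr do rewrite !lcoef_hS.
by rewrite /fdb2_coef /conv (_ : lcoef (hS h) 1 = 1) //; ring.
Qed.

Lemma lcoef_fdb2 (h : nat -> R) n : lcoef (fdb d (hS h) 2) n =
  if n <= 0 then fdb2_coef (hcoef h) (absz n) else if n == 2%:Z then 1 else 0.
Proof.
case: lerP => n_le0; first by rewrite -lcoef_fdb2_neg; congr lcoef; lia.
have [->|[->|n_gt2]] : n = 1 \/ n = 2%:Z \/ 2%:Z < n by lia.
1,2: by rewrite lcoef_fdb2E // lcoefM /= !big_ord_recl big_ord0 /lcoef /= ?deriv0 ?deriv1
          !(mul0r, mulr0, addr0, add0r, mulr1).
rewrite lcoef_gt_ldeg ?ldeg_fdb // ifF //; apply/eqP; lia.
Qed.

Lemma lcoef_fdb3_neg (h : nat -> R) (k : nat) : lcoef (fdb d (hS h) 3) (- k%:Z) =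
  d (fdb2_coef (hcoef h) k) + fdb2_coef (hcoef h) k.+1 + hfdb2_coef (hcoef h) k + hcoef h k.+2.
Proof.
rewrite fdbS lcoefD lcoef_ldx lcoef_fdb2_neg (lcoefM_ldeg1 _ _ (e := 2)) ?ldeg_fdb //.
rewrite [\sum_(j < 2) _]big_ord_recl big_ord1 !lcoef_fdb2 /= !lcoef_hS.
under eq_bigr do rewrite lcoef_hS lcoef_fdb2_neg.
by rewrite /hfdb2_coef !addn0 addn1 (_ : lcoef (hS h) 1 = 1) //= ; ring.
Qed.

Lemma lcoef_fdb3_pos (h : nat -> R) n : 0 < n -> lcoef (fdb d (hS h) 3) n =
  if n == 1 then 3%:R * h 1%N else if n == 3%:Z then 1 else 0.
Proof.
move=> n_gt0; have [->|[->|[->|n_gt3]]] : n = 1 \/ n = 2%:Z \/ n = 3%:Z \/ 3%:Z < n by lia.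
1-3: rewrite fdbS lcoefD lcoef_ldx lcoefM ldeg_fdb //;
  under eq_bigr do rewrite lcoef_fdb2;
  rewrite lcoef_fdb2 /= !big_ord_recl big_ord0 /lcoef /= /fdb2_coef /conv ?big_ord1 /=;
  by rewrite ?deriv0 ?deriv1 !(mul0r, mulr0, addr0, add0r, mulr1, mul1r); ring.
rewrite lcoef_gt_ldeg ?ldeg_fdb // !ifF //; apply/eqP; lia.
Qed.

Definition S1_next (c : nat -> R) (a0 a1 : R) k :=
  fdb2_coef c k + a0 * c k + (if k == 0%N then a1 - 2%:R * c 1%N else 0).

Definition S2_next (c : nat -> R) (a0 a1 a2 : R) k :=
  d (fdb2_coef c k) + fdb2_coef c k.+1 + hfdb2_coef c k + c k.+2 - 3%:R * c 1%N * c k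
  + a0 * fdb2_coef c k + a1 * c k
  + (if k == 0%N then a2 - 3%:R * (c 2%N + d (c 1%N)) - 2%:R * a0 * c 1%N else 0).

Lemma oppz_nat_eq0 (k : nat) : (- k%:Z == 0) = (k == 0)%N.
Proof. by case: k. Qed.

Lemma S1_coefP (h a : nat -> R) : S1 d h a <-> forall n, lcoef (aS a) (n - 1) =
  lcoef (fdb d (hS h) 2) n + a 0%N * lcoef (hS h) n
  + (if n == 0 then a 1%N - 2%:R * h 1%N else 0).
Proof.
rewrite /S1 /lseq; split=> S1ha n; move: (S1ha n);
  rewrite lcoef_lzM 2!lcoefD !lcoef_lCM lcoef_H2 lcoefC /cf lcoef_hS /=;
  by case: (n == 0); rewrite ?mulr1 ?mulr0 => ->; ring.
Qed.

Lemma S2_coefP (h a : nat -> R) : S2 d h a <-> forall n, lcoef (aS a) (n - 2%:Z) =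
  lcoef (fdb d (hS h) 3) n - 3%:R * h 1%N * lcoef (hS h) n
  + a 0%N * lcoef (fdb d (hS h) 2) n + a 1%N * lcoef (hS h) n
  + (if n == 0 then a 2%N - 3%:R * (h 2%N + d (h 1%N)) - 2%:R * a 0%N * h 1%N else 0).
Proof.
rewrite /S2 /lseq; split=> S2ha n; move: (S2ha n);
  rewrite lcoef_lz2M 3!lcoefD !lcoef_lCM lcoef_H3 lcoef_H2 lcoefC /cf !lcoef_hS /=;
  by case: (n == 0); rewrite ?mulr1 ?mulr0 => ->; ring.
Qed.

Lemma S1P (h a : nat -> R) : S1 d h a <-> forall k, a k.+1 = S1_next (hcoef h) (a 0%N) (a 1%N) k.
Proof.
have aE (k : nat) : lcoef (aS a) (- k%:Z - 1) = a k.+1.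
  by rewrite -lcoef_aS; congr lcoef; lia.
rewrite S1_coefP; split=> [S1ha k | a_rec n].
  by have := S1ha (- k%:Z); rewrite aE lcoef_fdb2_neg lcoef_hS oppz_nat_eq0.
case: (lerP n 0) => [n_le0|n_gt0].
  have -> : n = - (absz n)%:Z by lia.
  by rewrite aE lcoef_fdb2_neg lcoef_hS oppz_nat_eq0 a_rec.
have -> : (n == 0) = false by apply/eqP; lia.
rewrite lcoef_fdb2 (lt_geF n_gt0) addr0.
have [->|[->|n_gt2]] : n = 1 \/ n = 2%:Z \/ 2%:Z < n by lia.
- by rewrite /lcoef /= mulr1 add0r.
- by rewrite /lcoef /= mulr0 addr0.
have -> : (n == 2%:Z) = false by apply/eqP; lia.
by rewrite !lcoef_gt_ldeg ?mulr0 ?addr0 //=; lia.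
Qed.

Lemma S2P (h a : nat -> R) :
  S2 d h a <-> forall k, a k.+2 = S2_next (hcoef h) (a 0%N) (a 1%N) (a 2%N) k.
Proof.
have aE (k : nat) : lcoef (aS a) (- k%:Z - 2%:Z) = a k.+2.
  by rewrite -lcoef_aS; congr lcoef; lia.
rewrite S2_coefP; split=> [S2ha k | a_rec n].
  have := S2ha (- k%:Z); rewrite aE lcoef_fdb3_neg lcoef_fdb2_neg lcoef_hS.
  by rewrite oppz_nat_eq0 => ->; rewrite /S2_next /=; ring.
case: (lerP n 0) => [n_le0|n_gt0].
  have -> : n = - (absz n)%:Z by lia.
  by rewrite aE lcoef_fdb3_neg lcoef_fdb2_neg lcoef_hS oppz_nat_eq0 a_rec /S2_next /=; ring.
have -> : (n == 0) = false by apply/eqP; lia.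
rewrite lcoef_fdb3_pos // lcoef_fdb2 (lt_geF n_gt0) addr0.
have [->|[->|[->|n_gt3]]] : n = 1 \/ n = 2%:Z \/ n = 3%:Z \/ 3%:Z < n by lia.
- by rewrite /lcoef /= !mulr1 mulr0 subrr !add0r.
- by rewrite /lcoef /= !mulr0 mulr1 subr0 addr0 add0r.
- by rewrite /lcoef /= !mulr0 subr0 !addr0.
have -> : (n == 1) = false by apply/eqP; lia.
have -> : (n == 2%:Z) = false by apply/eqP; lia.
have -> : (n == 3%:Z) = false by apply/eqP; lia.
by rewrite !lcoef_gt_ldeg ?mulr0 ?subr0 ?addr0 //=; lia.
Qed.

Definition h_next (c : nat -> R) (a0 a1 : R) k :=
  a0 * c k.+1 + 3%:R * c 1%N * c k - a1 * c k
  - d (fdb2_coef c k) - hfdb2_coef c k - a0 * fdb2_coef c k.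

Lemma S1_next0 (c : nat -> R) a0 a1 : c 0%N = 0 -> S1_next c a0 a1 0 = a1.
Proof. by move=> c0; rewrite /S1_next /fdb2_coef /conv big_ord1 c0 deriv0 /=; ring. Qed.

Lemma S2_next0 (c : nat -> R) a0 a1 a2 : c 0%N = 0 -> S2_next c a0 a1 a2 0 = a2.
Proof.
move=> c0; rewrite /S2_next /hfdb2_coef /fdb2_coef /conv !big_ord_recl !big_ord0 /=.
by rewrite c0 !(mul0r, mulr0, add0r, addr0) deriv0 add0r derivMn; ring.
Qed.

Lemma S2_next_S1_next (c : nat -> R) a0 a1 a2 k : (0 < k)%N ->
  S2_next c a0 a1 a2 k = S1_next c a0 a1 k.+1 + c k.+2 - h_next c a0 a1 k.
Proof. by case: k => // k _; rewrite /S2_next /S1_next /h_next /=; ring. Qed.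

Lemma S12_h_next (h a : nat -> R) k : S12 d h a -> (0 < k)%N ->
  hcoef h k.+2 = h_next (hcoef h) (a 0%N) (a 1%N) k.
Proof.
case=> /S1P S1ha /S2P S2ha k_gt0.
have e := S2_next_S1_next (hcoef h) (a 0%N) (a 1%N) (a 2%N) k_gt0.
rewrite -S1ha -S2ha in e.
by apply/eqP; rewrite -subr_eq0 -(inj_eq (addrI (a k.+2))) addr0 {2}e; apply/eqP; ring.
Qed.

Definition eq_upto (m : nat) (c c' : nat -> R) := forall j, (j <= m)%N -> c j = c' j.

Lemma eq_uptoW (m n : nat) (c c' : nat -> R) : (n <= m)%N -> eq_upto m c c' -> eq_upto n c c'.
Proof. by move=> le_nm eq_c j le_jn; apply: eq_c; apply: leq_trans le_nm. Qed.

Lemma eq_conv (c c' : nat -> R) k : eq_upto k c c' -> conv c k = conv c' k.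
Proof. by move=> eq_c; apply: eq_bigr => -[j /= lt_jk] _; rewrite !eq_c ?leq_subr. Qed.

Lemma eq_fdb2_coef (c c' : nat -> R) k : eq_upto k.+1 c c' -> fdb2_coef c k = fdb2_coef c' k.
Proof. by move=> eq_c; rewrite /fdb2_coef (eq_conv (eq_uptoW _ eq_c)) ?eq_c. Qed.

Lemma eq_hfdb2_coef (c c' : nat -> R) k : eq_upto k.+1 c c' -> hfdb2_coef c k = hfdb2_coef c' k.
Proof.
move=> eq_c; apply: eq_bigr => -[j /= lt_jk] _.
by rewrite eq_c ?(eq_fdb2_coef (eq_uptoW _ eq_c)) ?ltnS ?leq_subr // ltnW.
Qed.

Lemma eq_h_next (c c' : nat -> R) a0 a1 k : eq_upto k.+1 c c' -> h_next c a0 a1 k = h_next c' a0 a1 k.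
Proof.
move=> eq_c; rewrite /h_next (eq_fdb2_coef eq_c) (eq_hfdb2_coef eq_c).
by rewrite !eq_c // ltnW.
Qed.

Lemma eq_S1_next (c c' : nat -> R) a0 a1 k : eq_upto k.+1 c c' -> S1_next c a0 a1 k = S1_next c' a0 a1 k.
Proof. by move=> eq_c; rewrite /S1_next (eq_fdb2_coef eq_c) !eq_c // ltnW. Qed.

Definition h_step (a0 a1 h1 h2 : R) (c : nat -> R) (n : nat) :=
  match n with 0 => 0 | 1 => h1 | 2 => h2 | k.+3 => h_next c a0 a1 k.+1 end.

Lemma h_step_causal a0 a1 h1 h2 : causal (h_step a0 a1 h1 h2).
Proof. by move=> c c' [|[|[|k]]] //= eq_c; apply: eq_h_next => j; rewrite -ltnS; apply: eq_c. Qed.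

Lemma S12_hcoef_fix (h a : nat -> R) : S12 d h a ->
  forall n : nat, hcoef h n = h_step (a 0%N) (a 1%N) (h 1%N) (h 2%N) (hcoef h) n.
Proof. by move=> S12ha [|[|[|k]]] //; apply: S12_h_next. Qed.

Lemma S12_exists (a0 a1 h1 h2 : R) : exists h a : nat -> R,
  S12 d h a /\ a 0%N = a0 /\ a 1%N = a1 /\ h 1%N = h1 /\ h 2%N = h2.
Proof.
pose h := cfix 0 (h_step a0 a1 h1 h2).
have hE : forall n : nat, h n = h_step a0 a1 h1 h2 h n := cfixE 0 (h_step_causal a0 a1 h1 h2).
have hcoefE m : eq_upto m (hcoef h) h by case=> // _; rewrite hE.
pose a j := if j is k.+1 then S1_next h a0 a1 k else a0.
have a1E : a 1%N = a1 by apply: S1_next0; rewrite hE.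
have S1ha k : a k.+1 = S1_next (hcoef h) (a 0%N) (a 1%N) k.
  by rewrite a1E (eq_S1_next _ _ (hcoefE _)).
exists h, a; split; last by rewrite a1E (hE 1%N) (hE 2%N).
split; first exact/S1P.
apply/S2P => -[|k]; first by rewrite S2_next0.
rewrite S2_next_S1_next // -S1ha (eq_h_next _ _ (hcoefE _)) [hcoef h _]hE.
by rewrite a1E /= addrK.
Qed.

Lemma S12_unique (h a h' a' : nat -> R) : S12 d h a -> S12 d h' a' ->
  a 0%N = a' 0%N -> a 1%N = a' 1%N -> h 1%N = h' 1%N -> h 2%N = h' 2%N ->
  hcoef h =1 hcoef h' /\ a =1 a'.
Proof.
move=> S12ha S12ha' eq_a0 eq_a1 eq_h1 eq_h2.
have eq_h : hcoef h =1 hcoef h'.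
  apply: (causal_fix_unique (h_step_causal (a 0%N) (a 1%N) (h 1%N) (h 2%N))).
    exact: S12_hcoef_fix.
  by rewrite eq_a0 eq_a1 eq_h1 eq_h2; apply: S12_hcoef_fix.
split=> // -[|[|k]] //.
have [/S1P S1ha _] := S12ha; have [/S1P S1ha' _] := S12ha'.
by rewrite S1ha S1ha' eq_a0 eq_a1; apply: eq_S1_next => j _; apply: eq_h.
Qed.

Lemma conv_hcoef (h : nat -> R) :
  [/\ conv (hcoef h) 0 = 0, conv (hcoef h) 1 = 0 & conv (hcoef h) 2 = h 1%N ^+ 2].
Proof. by split; rewrite /conv !big_ord_recl big_ord0 /= ?expr2; ring. Qed.

Lemma S12_a2 (h a : nat -> R) : S12 d h a ->
  a 2%N = 2%:R * h 2%N + d (h 1%N) + a 0%N * h 1%N.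
Proof.
case=> /S1P -> _; have [_ c1 _] := conv_hcoef h.
by rewrite /S1_next /fdb2_coef c1 /=; ring.
Qed.

Lemma S12_h3 (h a : nat -> R) : S12 d h a ->
  h 3%N = - d (d (h 1%N)) - 2%:R * d (h 2%N) + h 1%N ^+ 2 - a 1%N * h 1%N
          - a 0%N * (d (h 1%N) + h 2%N).
Proof.
move=> S12ha; have := S12_h_next (k := 1) S12ha; rewrite /= => -> //.
have [c0 c1 _] := conv_hcoef h.
rewrite /h_next /hfdb2_coef /fdb2_coef !big_ord_recl big_ord0 /= c0 c1.
by rewrite !derivD deriv0 derivMn; ring.
Qed.

Lemma dkp2_hc1 (h a : nat -> R) : dkp2_hc d h a 1 = d (2%:R * h 2%N + d (h 1%N)).
Proof.
rewrite /dkp2_hc /cf /dkp2_h lcoef_ldx lcoef_H2 lcoef_fdb2_neg /= subr0.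
by have [_ c1 _] := conv_hcoef h; rewrite /fdb2_coef c1 addr0 addrC.
Qed.

Lemma dkp2_hc2 (h a : nat -> R) : S12 d h a ->
  dkp2_hc d h a 2 = - d (2%:R * d (d (h 1%N)) + 3%:R * d (h 2%N) - 3%:R * h 1%N ^+ 2
                      + 2%:R * a 0%N * (d (h 1%N) + h 2%N) + 2%:R * a 1%N * h 1%N).
Proof.
move=> S12ha; rewrite /dkp2_hc /cf /dkp2_h lcoef_ldx lcoef_H2 lcoef_fdb2_neg /= subr0.
have [_ _ c2] := conv_hcoef h.
by rewrite /fdb2_coef c2 /= (S12_h3 S12ha) -[in RHS]derivN; congr d; ring.
Qed.

Lemma S12_fdb_relation (h a : nat -> R) : S12 d h a ->
  let a0 := a 0%N in let a1 := a 1%N in let a2 := a 2%N in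
  let h1 := h 1%N in let h2 := h 2%N in
  lseq (lmul (lz R) (ladd (ladd (fdb d (hS h) 2) (lmul (lC a0) (fdb d (hS h) 1)))
                          (lC (a1 - 2%:R * h1))))
       (ladd (ladd (ladd (fdb d (hS h) 3) (lmul (lC a0) (fdb d (hS h) 2)))
                   (lmul (lC (a1 - 3%:R * h1)) (fdb d (hS h) 1)))
             (lC (a2 - 2%:R * a0 * h1 - 3%:R * h2 - 3%:R * d h1))).
Proof.
case=> /S1_coefP S1ha /S2_coefP S2ha a0 a1 a2 h1 h2 n; rewrite {}/a0 {}/a1 {}/a2 {}/h1 {}/h2.
rewrite lcoef_lzM 2!lcoefD 3!lcoefD !lcoef_lCM !lcoefC !lcoef_fdb1.
transitivity (lcoef (aS a) (n - 2%:Z)).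
  rewrite (_ : n - 2%:Z = n - 1 - 1); last by lia.
  by rewrite S1ha; case: (n - 1 == 0); rewrite ?mulr1 ?mulr0; ring.
by rewrite S2ha; case: (n == 0); rewrite ?mulr1 ?mulr0; ring.
Qed.

Definition logder (a : nat -> R) := lmul (ldx d (aS a)) (linv (aS a)).

Lemma lcoef_logder (a : nat -> R) :
  [/\ lcoef (logder a) 0 = 0, lcoef (logder a) (- 1%:Z) = d (a 0%N),
      lcoef (logder a) (- 2%:Z) = d (a 1%N) - a 0%N * d (a 0%N)
    & lcoef (logder a) (- 3%:Z) =
        d (a 2%N) - a 0%N * d (a 1%N) + (a 0%N ^+ 2 - a 1%N) * d (a 0%N)].
Proof.
by split; rewrite /logder /lcoef /= !big_ord_recl !big_ord0 /= ?deriv1 ?mul0r ?add0r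
  ?big_ord_recl ?big_ord0 /= /bump /=; ring.
Qed.

Definition htilde_coef (h a : nat -> R) (j : nat) := lcoef (htilde d (hS h) (aS a)) (- j%:Z).
(* Unfolding it would make [simpl] expand the inverse series [linv (aS a)]. *)
Arguments htilde_coef : simpl never.

Lemma htilde_coefE (h a : nat -> R) j :
  htilde_coef h a j = hcoef h j + lcoef (logder a) (- j%:Z).
Proof. by rewrite /htilde_coef lcoefD lcoef_hS. Qed.

Lemma lcoef_htilde (h a : nat -> R) :
  lcoef (htilde d (hS h) (aS a)) =1 lcoef (hS (htilde_coef h a)).
Proof.
move=> n; case: (lerP n 0) => [n_le0|n_gt0].
  have -> : n = - (absz n)%:Z by lia.
  rewrite lcoef_hS; case: (absz n) => [|k] //.
  by have [logder0 _ _ _] := lcoef_logder a; rewrite lcoefD lcoef_hS logder0 addr0.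
have [->|n_gt1] : n = 1 \/ 1 < n by lia.
  by rewrite lcoefD (@lcoef_gt_ldeg _ (logder a)) ?addr0.
by rewrite !lcoef_gt_ldeg.
Qed.

Lemma lcoef_H2_hS (g : nat -> R) n : lcoef (H2 d (hS g)) n =
  if n <= 0 then fdb2_coef (hcoef g) (absz n) - (if n == 0 then 2%:R * g 1%N else 0)
  else if n == 2%:Z then 1 else 0.
Proof.
rewrite lcoef_H2 lcoef_fdb2 /cf lcoef_hS; case: (lerP n 0) => // n_gt0.
by rewrite (_ : (n == 0) = false) ?subr0 //; apply/eqP; lia.
Qed.

Lemma lcoef_H2_htilde (h a : nat -> R) :
  lcoef (H2 d (htilde d (hS h) (aS a))) =1 lcoef (H2 d (hS (htilde_coef h a))).
Proof. exact: eq_H2 (lcoef_htilde h a). Qed.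

Definition dH2_coef (h a : nat -> R) k :=
  fdb2_coef (hcoef (htilde_coef h a)) k - fdb2_coef (hcoef h) k
  - (if k == 0%N then 2%:R * (htilde_coef h a 1 - h 1%N) else 0).

Lemma lcoef_dH2_neg (h a : nat -> R) (k : nat) :
  lcoef (lsub (H2 d (htilde d (hS h) (aS a))) (H2 d (hS h))) (- k%:Z) = dH2_coef h a k.
Proof.
rewrite lcoefB lcoef_H2_htilde !lcoef_H2_hS oppr_le0 lez_nat oppz_nat_eq0 abszN absz_nat.
by rewrite /dH2_coef; case: (k == 0%N) => /=; ring.
Qed.

Lemma lcoef_dH2_pos (h a : nat -> R) n : 0 < n ->
  lcoef (lsub (H2 d (htilde d (hS h) (aS a))) (H2 d (hS h))) n = 0.
Proof. by move=> n_gt0; rewrite lcoefB lcoef_H2_htilde !lcoef_H2_hS (lt_geF n_gt0) subrr. Qed.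

Lemma dkp2_acE (h a : nat -> R) k :
  dkp2_ac d h a k = dH2_coef h a k.+1 + \sum_(j < k.+1) a j * dH2_coef h a (k - j)%N.
Proof.
rewrite /dkp2_ac /cf /dkp2_a (lcoefM_ldeg1 (e := 2) k) //.
rewrite [\sum_(j < 2) _]big1 => [|[j /= _] _]; last by rewrite lcoef_dH2_pos ?mulr0 //; lia.
rewrite lcoef_dH2_neg (_ : lcoef (aS a) 1 = 1) // mul1r addr0.
by congr (_ + _); apply: eq_bigr => j _; rewrite lcoef_aS lcoef_dH2_neg.
Qed.

Lemma dkp2_ac0 (h a : nat -> R) :
  dkp2_ac d h a 0 = d (2%:R * a 1%N - a 0%N ^+ 2 + d (a 0%N)).
Proof.
rewrite dkp2_acE big_ord1 /dH2_coef /=.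
have [_ l1 l2 _] := lcoef_logder a.
have [c0 c1 _] := conv_hcoef h; have [c0' c1' _] := conv_hcoef (htilde_coef h a).
rewrite /fdb2_coef c0 c1 c0' c1' /= !htilde_coefE l1 l2 /=.
by rewrite !(expr2, derivD, derivB, derivN, derivMn, derivM, derivn, deriv0); ring.
Qed.

Lemma dkp2_ac1 (h a : nat -> R) :
  dkp2_ac d h a 1 = 2%:R * d (a 2%N) + d (d (a 1%N)) + 2%:R * d (a 0%N) * (h 1%N - a 1%N).
Proof.
rewrite dkp2_acE !big_ord_recl big_ord0 /dH2_coef /=.
have [_ l1 l2 l3] := lcoef_logder a.
have [c0 c1 c2] := conv_hcoef h; have [c0' c1' c2'] := conv_hcoef (htilde_coef h a).
rewrite /fdb2_coef c0 c1 c2 c0' c1' c2' /= !htilde_coefE l1 l2 l3 /bump /=.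
by rewrite !(expr2, derivD, derivB, derivN, derivMn, derivM, derivn, deriv0); ring.
Qed.

End Derivation.

Theorem mainTheorem7 (R : comNzRingType) (d : R -> R) (hd : is_derivation d) :
  (forall a0 a1 h1 h2 : R, exists (h a : nat -> R),
      S12 d h a /\ a 0%N = a0 /\ a 1%N = a1 /\ h 1%N = h1 /\ h 2%N = h2) /\
  (forall h a h' a' : nat -> R, S12 d h a -> S12 d h' a' ->
      a 0%N = a' 0%N -> a 1%N = a' 1%N -> h 1%N = h' 1%N -> h 2%N = h' 2%N ->
      (forall j, (1 <= j)%N -> h j = h' j) /\ (forall j, a j = a' j)) /\
  (forall h a : nat -> R, S12 d h a ->
    let a0 := a 0%N in let a1 := a 1%N in let a2 := a 2%N in
    let h1 := h 1%N in let h2 := h 2%N in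
    a2 = 2%:R * h2 + d h1 + a0 * h1 /\
    h 3%N = - d (d h1) - 2%:R * d h2 + h1 ^+ 2 - a1 * h1 - a0 * (d h1 + h2) /\
    dkp2_ac d h a 0 = d (2%:R * a1 - a0 ^+ 2 + d a0) /\
    dkp2_ac d h a 1 = 2%:R * d a2 + d (d a1) + 2%:R * d a0 * (h1 - a1) /\
    dkp2_hc d h a 1 = d (2%:R * h2 + d h1) /\
    dkp2_hc d h a 2 = - d (2%:R * d (d h1) + 3%:R * d h2 - 3%:R * h1 ^+ 2
                           + 2%:R * a0 * (d h1 + h2) + 2%:R * a1 * h1) /\
    lseq (lmul (lz R) (ladd (ladd (fdb d (hS h) 2) (lmul (lC a0) (fdb d (hS h) 1)))
                        (lC (a1 - 2%:R * h1))))
         (ladd (ladd (ladd (fdb d (hS h) 3) (lmul (lC a0) (fdb d (hS h) 2)))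
                     (lmul (lC (a1 - 3%:R * h1)) (fdb d (hS h) 1)))
               (lC (a2 - 2%:R * a0 * h1 - 3%:R * h2 - 3%:R * d h1)))).
Proof.
split; first exact: S12_exists.
split=> [h a h' a' S12ha S12ha' eq_a0 eq_a1 eq_h1 eq_h2 | h a S12ha].
  have [eq_h eq_a] := S12_unique hd S12ha S12ha' eq_a0 eq_a1 eq_h1 eq_h2.
  by split=> // -[|j] // _; apply: (eq_h j.+1).
do ![split]; [exact: S12_a2 | exact: S12_h3 | exact: dkp2_ac0 | exact: dkp2_ac1
  | exact: dkp2_hc1 | exact: dkp2_hc2 | exact: S12_fdb_relation].
Qed.
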